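(* For every three-qubit state $\varrho$ that can be prepared in the triangle network, $\langle GHZ|\varrho|GHZ\rangle\le 1/\sqrt2$, where $|GHZ\rangle=(|000\rangle+|111\rangle)/\sqrt2$.
   Context: Triangle network: three sources $\varrho_a,\varrho_b,\varrho_c$ (finite-dimensional, arbitrary dimension), each bipartite, shared respectively by parties $BC$, $AC$, $AB$. A state can be prepared in the triangle network if $\varrho=\sum_\lambda p_\lambda\,\mathcal E_A^{(\lambda)}\otimes\mathcal E_B^{(\lambda)}\otimes\mathcal E_C^{(\lambda)}[\varrho_a\otimes\varrho_b\otimes\varrho_c]$ (subsystems suitably ordered), with a probability distribution $p_\lambda$ and quantum channels $\mathcal E_X^{(\lambda)}$ mapping the two subsystems received by party $X$ to a qubit. *)

From mathcomp Require Import all_boot all_order all_algebra all_field.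
Set Implicit Arguments. Unset Strict Implicit. Unset Printing Implicit Defensive.
Import Order.TTheory GRing.Theory Num.Theory.
Local Open Scope ring_scope.

Definition op (I : finType) := I -> I -> algC.

Definition psd (I : finType) (A : op I) : Prop :=
  (forall i j, A j i = (A i j)^*) /\
  forall v : I -> algC, 0 <= \sum_i \sum_j (v i)^* * A i j * v j.

Definition density (I : finType) (A : op I) : Prop :=
  psd A /\ \sum_i A i i = 1.

Definition is_channel (I J : finType) (E : op I -> op J) : Prop :=
  exists (K : finType) (kr : K -> J -> I -> algC),
    (forall i i', \sum_k \sum_j (kr k j i)^* * kr k j i' = (i == i')%:R) /\
    (forall rho j j',
       E rho j j' = \sum_k \sum_i \sum_i' kr k j i * rho i i' * (kr k j' i')^*).

Definition munit (I : finType) (i i' : I) : op I :=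
  fun j j' => ((j == i) && (j' == i'))%:R.

Definition qubit := 'I_2.
Definition qubit3 := (qubit * qubit * qubit)%type.

(* Triangle network, one fixed lambda:
   source a = (a1,a2) shared by B (gets a1) and C (gets a2),
   source b = (b1,b2) shared by A (gets b1) and C (gets b2),
   source c = (c1,c2) shared by A (gets c1) and B (gets c2).
   Output = (E_A (x) E_B (x) E_C)[rho_a (x) rho_b (x) rho_c] with subsystems
   routed as above; the tensor product of the (linear) channels is written
   through its action on matrix units. *)
Definition triangle_out (Ia1 Ia2 Ib1 Ib2 Ic1 Ic2 : finType)
  (ra : op (Ia1 * Ia2)%type) (rb : op (Ib1 * Ib2)%type) (rc : op (Ic1 * Ic2)%type)
  (EA : op (Ib1 * Ic1)%type -> op qubit) (EB : op (Ia1 * Ic2)%type -> op qubit)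
  (EC : op (Ia2 * Ib2)%type -> op qubit) : op qubit3 :=
  fun x x' =>
    \sum_(ia : (Ia1 * Ia2)%type) \sum_(ia' : (Ia1 * Ia2)%type)
    \sum_(ib : (Ib1 * Ib2)%type) \sum_(ib' : (Ib1 * Ib2)%type)
    \sum_(ic : (Ic1 * Ic2)%type) \sum_(ic' : (Ic1 * Ic2)%type)
      ra ia ia' * rb ib ib' * rc ic ic' *
      EA (munit (ib.1, ic.1) (ib'.1, ic'.1)) x.1.1 x'.1.1 *
      EB (munit (ia.1, ic.2) (ia'.1, ic'.2)) x.1.2 x'.1.2 *
      EC (munit (ia.2, ib.2) (ia'.2, ib'.2)) x.2 x'.2.

Definition triangle_preparable (rho : op qubit3) : Prop :=
  exists (da1 da2 db1 db2 dc1 dc2 : nat)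
    (ra : op ('I_da1 * 'I_da2)%type) (rb : op ('I_db1 * 'I_db2)%type)
    (rc : op ('I_dc1 * 'I_dc2)%type)
    (L : finType) (p : L -> algC)
    (EA : L -> op ('I_db1 * 'I_dc1)%type -> op qubit)
    (EB : L -> op ('I_da1 * 'I_dc2)%type -> op qubit)
    (EC : L -> op ('I_da2 * 'I_db2)%type -> op qubit),
    [/\ [/\ density ra, density rb & density rc],
        (forall l, 0 <= p l), \sum_l p l = 1,
        (forall l, [/\ is_channel (EA l), is_channel (EB l) & is_channel (EC l)]) &
        (forall x x', rho x x' =
           \sum_l p l * triangle_out ra rb rc (EA l) (EB l) (EC l) x x')].

Definition ghz (x : qubit3) : algC :=
  if (x == (ord0, ord0, ord0)) || (x == (ord_max, ord_max, ord_max))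
  then (sqrtC 2)^-1 else 0.

Definition ghz_fidelity (rho : op qubit3) : algC :=
  \sum_x \sum_x' (ghz x)^* * rho x x' * ghz x'.

(* The GHZ fidelity is linear in the state, so by convexity it suffices to bound it for one
   choice of channels and, after spectral decomposition of the sources, for pure sources.  With
   the channels in Kraus form, the output restricted to |000> and |111> is the Gram matrix of two
   amplitude vectors Phi_0, Phi_1, and the fidelity is |Phi_0 + Phi_1|^2 / 2, which is at most
   (sqrt P_0 + sqrt P_1)^2 / 2 for P_s = |Phi_s|^2.  Expanding the three sources in their Schmidt
   bases, P_s becomes a triangle-shaped sum of Gram entries; a Cauchy-Schwarz inequality of
   Finner type bounds P_s^2 by a product x_s y_s z_s of one quantity per party, and trace
   preservation of the channels gives x_0 + x_1 <= 1, and likewise for y and z.  AM-GM then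
   yields sqrt P_0 + sqrt P_1 <= 2^(1/4), i.e. a fidelity of at most 1/sqrt 2. *)

From mathcomp Require Import all_boot all_order all_algebra all_field.
From mathcomp Require Import ring.
Import Order.TTheory GRing.Theory Num.Theory.
Set Implicit Arguments. Unset Strict Implicit. Unset Printing Implicit Defensive.
Local Open Scope ring_scope.

Section InnerProduct.
Variable C : numClosedFieldType.
Implicit Types I J K U : finType.

Lemma real_mul_self_ge0 (x : C) : x \is Num.real -> 0 <= x * x.
Proof. by rewrite -expr2 realEsqr. Qed.

Lemma convex_le (L : finType) (p f : L -> C) (b : C) :
  (forall l, 0 <= p l) -> \sum_l p l = 1 -> (forall l, f l <= b) -> \sum_l p l * f l <= b.
Proof.
move=> p_ge0 p_sum f_le; rewrite -[b]mul1r -p_sum mulr_suml.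
by apply: ler_sum => l _; rewrite ler_wpM2l.
Qed.

Lemma sum_pairE I1 I2 (F : I1 * I2 -> C) :
  \sum_p F p = \sum_i1 \sum_i2 F (i1, i2).
Proof. by rewrite pair_bigA; apply: eq_bigr => -[]. Qed.

Lemma sum_tripleE (A B D : finType) (F : A * B * D -> C) :
  \sum_p F p = \sum_a \sum_b \sum_d F (a, b, d).
Proof. by rewrite sum_pairE sum_pairE. Qed.

Lemma exchange_big3 (A B D X Y Z : finType) (F : A -> B -> D -> X -> Y -> Z -> C) :
  \sum_a \sum_b \sum_d \sum_x \sum_y \sum_z F a b d x y z =
  \sum_x \sum_y \sum_z \sum_a \sum_b \sum_d F a b d x y z.
Proof.
transitivity (\sum_(p : A * B * D) \sum_(q : X * Y * Z) F p.1.1 p.1.2 p.2 q.1.1 q.1.2 q.2).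
  rewrite sum_tripleE; do 3!(apply: eq_bigr => ? _); by rewrite sum_tripleE.
rewrite exchange_big sum_tripleE; do 3!(apply: eq_bigr => ? _); by rewrite sum_tripleE.
Qed.

Lemma sum3_mul (A B D : finType) (F : A -> C) (G : B -> C) (H : D -> C) :
  (\sum_a F a) * (\sum_b G b) * (\sum_d H d) = \sum_a \sum_b \sum_d F a * G b * H d.
Proof.
rewrite big_distrlr mulr_suml; apply: eq_bigr => a _; rewrite mulr_suml.
by apply: eq_bigr => b _; rewrite mulr_sumr.
Qed.

Lemma mulr_sum3l (A B D : finType) (F : A -> B -> D -> C) (x : C) :
  (\sum_a \sum_b \sum_d F a b d) * x = \sum_a \sum_b \sum_d F a b d * x.
Proof.
rewrite mulr_suml; apply: eq_bigr => a _; rewrite mulr_suml.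
by apply: eq_bigr => b _; rewrite mulr_suml.
Qed.

Lemma mulr_sum3r (A B D : finType) (F : A -> B -> D -> C) (x : C) :
  x * (\sum_a \sum_b \sum_d F a b d) = \sum_a \sum_b \sum_d x * F a b d.
Proof.
rewrite mulr_sumr; apply: eq_bigr => a _; rewrite mulr_sumr.
by apply: eq_bigr => b _; rewrite mulr_sumr.
Qed.

Lemma sum_pairs_interleave (A B D : finType) (F : A -> B -> D -> A -> B -> D -> C) :
  \sum_a \sum_b \sum_d \sum_a' \sum_b' \sum_d' F a b d a' b' d' =
  \sum_(x : A * A) \sum_(y : B * B) \sum_(z : D * D) F x.1 y.1 z.1 x.2 y.2 z.2.
Proof.
rewrite sum_pairE; apply: eq_bigr => a _.
under eq_bigr do rewrite exchange_big.
rewrite exchange_big; apply: eq_bigr => a' _.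
rewrite sum_pairE; apply: eq_bigr => b _.
rewrite exchange_big; apply: eq_bigr => b' _.
by rewrite sum_pairE.
Qed.

Lemma sum_pairs_transpose (A B : finType) (F : A -> A -> B -> B -> C) :
  \sum_(y : A * A) \sum_(z : B * B) F y.1 y.2 z.1 z.2 =
  \sum_(I : A * B) \sum_(I' : A * B) F I.1 I'.1 I.2 I'.2.
Proof.
rewrite !sum_pairE; apply: eq_bigr => a _.
under eq_bigr do rewrite sum_pairE.
under [RHS]eq_bigr do rewrite sum_pairE.
by rewrite exchange_big.
Qed.

Definition dotv I (u v : I -> C) := \sum_i u i * (v i)^*.
Definition nrm2 I (u : I -> C) := dotv u u.

Lemma nrm2_ge0 I (u : I -> C) : 0 <= nrm2 u.
Proof. by apply: sumr_ge0 => i _; apply: mul_conjC_ge0. Qed.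

Lemma nrm2_eq0 I (u : I -> C) : nrm2 u = 0 -> forall i, u i = 0.
Proof.
move=> /psumr_eq0P u0 i; apply/eqP; rewrite -mul_conjC_eq0.
by apply/eqP/u0 => // j _; apply: mul_conjC_ge0.
Qed.

Lemma dotvC I (u v : I -> C) : dotv v u = (dotv u v)^*.
Proof.
by rewrite /dotv rmorph_sum; apply: eq_bigr => i _; rewrite rmorphM /= conjCK mulrC.
Qed.

Lemma eq_nrm2 I (u v : I -> C) : (forall i, u i = v i) -> nrm2 u = nrm2 v.
Proof. by move=> uv; apply: eq_bigr => i _; rewrite uv. Qed.

Lemma nrm2D I (u v : I -> C) :
  nrm2 (fun i => u i + v i) = nrm2 u + nrm2 v + dotv u v + (dotv u v)^*.
Proof.
rewrite /nrm2 -dotvC /dotv -!big_split /=; apply: eq_bigr => i _.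
by rewrite rmorphD /=; ring.
Qed.

Lemma dotv_suml J I (u : J -> I -> C) (v : I -> C) :
  dotv (fun i => \sum_j u j i) v = \sum_j dotv (u j) v.
Proof.
rewrite /dotv; under eq_bigr do rewrite mulr_suml.
by rewrite exchange_big.
Qed.

Lemma dotv_sumr J I (u : J -> I -> C) (v : I -> C) :
  dotv v (fun i => \sum_j u j i) = \sum_j dotv v (u j).
Proof.
by rewrite dotvC dotv_suml rmorph_sum; apply: eq_bigr => j _; rewrite /= -dotvC.
Qed.

Lemma dotvZl I (c : C) (u v : I -> C) : dotv (fun i => c * u i) v = c * dotv u v.
Proof. by rewrite /dotv mulr_sumr; apply: eq_bigr => i _; rewrite mulrA. Qed.

Lemma dotvZr I (c : C) (u v : I -> C) : dotv v (fun i => c * u i) = c^* * dotv v u.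
Proof. by rewrite dotvC dotvZl rmorphM /= -dotvC. Qed.

Lemma dotv_sum3 (A B D K : finType) (F G : A -> B -> D -> C) (u v : A -> B -> D -> K -> C) :
  dotv (fun k => \sum_a \sum_b \sum_d F a b d * u a b d k)
       (fun k => \sum_a \sum_b \sum_d G a b d * v a b d k) =
  \sum_a \sum_b \sum_d \sum_a' \sum_b' \sum_d'
    F a b d * (G a' b' d')^* * dotv (u a b d) (v a' b' d').
Proof.
rewrite dotv_suml; apply: eq_bigr => a _; rewrite dotv_suml; apply: eq_bigr => b _.
rewrite dotv_suml; apply: eq_bigr => d _; rewrite dotvZl dotv_sumr mulr_sumr.
apply: eq_bigr => a' _; rewrite dotv_sumr mulr_sumr; apply: eq_bigr => b' _.
rewrite dotv_sumr mulr_sumr; apply: eq_bigr => d' _.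
by rewrite dotvZr mulrA.
Qed.

Lemma weighted_cauchy_schwarz I (w a b : I -> C) : (forall i, 0 <= w i) ->
  (\sum_i w i * (a i * (b i)^*)) * (\sum_i w i * (a i * (b i)^*))^*
  <= (\sum_i w i * (a i * (a i)^*)) * (\sum_i w i * (b i * (b i)^*)).
Proof.
move=> w_ge0.
set S := \sum_i w i * (a i * (b i)^*).
set A := \sum_i w i * (a i * (a i)^*); set B := \sum_i w i * (b i * (b i)^*).
have conjS : S^* = \sum_i w i * ((a i)^* * b i).
  by rewrite rmorph_sum; apply: eq_bigr => i _; rewrite !rmorphM /= conjCK geC0_conj ?w_ge0.
(* Lagrange's identity *)
pose c i j := a i * b j - a j * b i.
have lagrange : \sum_i \sum_j w i * w j * (c i j * (c i j)^*) = 2 * (A * B - S * S^*).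
  have -> : 2 * (A * B - S * S^*) = A * B + B * A - S * S^* - S^* * S.
    by rewrite mulr_natl mulr2n; ring.
  rewrite conjS /A /B /S !big_distrlr /= -big_split -!sumrB /=.
  apply: eq_bigr => i _; rewrite -big_split -!sumrB /=; apply: eq_bigr => j _.
  by rewrite /c !rmorphB !rmorphM /=; ring.
have : 0 <= \sum_i \sum_j w i * w j * (c i j * (c i j)^*).
  apply: sumr_ge0 => i _; apply: sumr_ge0 => j _.
  by rewrite mulr_ge0 ?mul_conjC_ge0 ?mulr_ge0.
by rewrite lagrange pmulr_rge0 ?ltr0n // subr_ge0.
Qed.

Lemma cauchy_schwarz I (u v : I -> C) :
  dotv u v * (dotv u v)^* <= nrm2 u * nrm2 v.
Proof.
have := weighted_cauchy_schwarz u v (fun=> ler01).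
by rewrite !(eq_bigr _ (fun i _ => mul1r _)).
Qed.

Lemma dotv_le_nrm2 I (u v : I -> C) : nrm2 v <= dotv u v -> dotv u v <= nrm2 u.
Proof.
move=> le_v_uv; have uv_ge0 := le_trans (nrm2_ge0 v) le_v_uv.
have [->|uv_neq0] := eqVneq (dotv u v) 0; first exact: nrm2_ge0.
have uv_gt0 : 0 < dotv u v by rewrite lt_def uv_neq0.
rewrite -(ler_pM2r uv_gt0); have := cauchy_schwarz u v.
rewrite geC0_conj // => /le_trans; apply.
by rewrite ler_wpM2l ?nrm2_ge0.
Qed.

End InnerProduct.

Section Contractions.
Variable C : numClosedFieldType.
Implicit Types I J K U : finType.

Definition suborthonormal J I (phi : J -> I -> C) :=
  (forall j j', dotv (phi j) (phi j') = (j == j')%:R * nrm2 (phi j)) /\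
  (forall j, nrm2 (phi j) <= 1).

Lemma bessel J I (phi : J -> I -> C) (y : I -> C) : suborthonormal phi ->
  \sum_j dotv y (phi j) * (dotv y (phi j))^* <= nrm2 y.
Proof.
move=> [phi_orth phi_le1]; set c := fun j => dotv y (phi j).
pose z i := \sum_j c j * phi j i.
have yz : dotv y z = \sum_j c j * (c j)^*.
  by rewrite dotv_sumr; apply: eq_bigr => j _; rewrite dotvZr mulrC.
have zz : nrm2 z = \sum_j c j * (c j)^* * nrm2 (phi j).
  rewrite /nrm2 {1}/z dotv_suml; apply: eq_bigr => j _.
  rewrite dotvZl /z dotv_sumr (bigD1 j) //= big1 ?addr0 => [|j' /negbTE nj].
    by rewrite dotvZr phi_orth eqxx mul1r mulrA.
  by rewrite dotvZr phi_orth eq_sym nj mul0r mulr0.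
rewrite -yz; apply: dotv_le_nrm2; rewrite yz zz; apply: ler_sum => j _.
by rewrite ler_piMr ?mul_conjC_ge0 ?phi_le1.
Qed.

Lemma nrm2_orthonormal_sum J I (w : J -> I -> C) (c : J -> C) :
  (forall j j', dotv (w j) (w j') = (j == j')%:R) ->
  nrm2 (fun i => \sum_j c j * w j i) = nrm2 c.
Proof.
move=> w_on; rewrite /nrm2 dotv_suml; apply: eq_bigr => j _.
rewrite dotvZl dotv_sumr (bigD1 j) //= big1 ?addr0 => [|j' /negbTE nj].
  by rewrite dotvZr w_on eqxx mulr1.
by rewrite dotvZr w_on eq_sym nj mulr0.
Qed.

Definition tensorf J1 J2 I1 I2 (e : J1 -> I1 -> C) (f : J2 -> I2 -> C) :=
  fun (j : J1 * J2) (i : I1 * I2) => e j.1 i.1 * f j.2 i.2.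

Lemma dotv_tensorf J1 J2 I1 I2 (e : J1 -> I1 -> C) (f : J2 -> I2 -> C) j j' :
  dotv (tensorf e f j) (tensorf e f j') = dotv (e j.1) (e j'.1) * dotv (f j.2) (f j'.2).
Proof.
rewrite /dotv sum_pairE big_distrlr /=.
by apply: eq_bigr => i1 _; apply: eq_bigr => i2 _; rewrite /tensorf rmorphM /=; ring.
Qed.

Lemma suborthonormal_tensorf J1 J2 I1 I2 (e : J1 -> I1 -> C) (f : J2 -> I2 -> C) :
  suborthonormal e -> suborthonormal f -> suborthonormal (tensorf e f).
Proof.
move=> [e_orth e_le1] [f_orth f_le1]; split=> [[j1 j2] [j1' j2']|j].
  rewrite /nrm2 !dotv_tensorf e_orth f_orth /= xpair_eqE.
  by case: eqP; case: eqP; rewrite /= ?mul1r ?mul0r ?mulr0.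
by rewrite /nrm2 dotv_tensorf -[1]mulr1 ler_pM ?nrm2_ge0 ?e_le1 ?f_le1.
Qed.

Definition mxv K U (kap : K -> U -> C) (v : U -> C) : K -> C :=
  fun k => \sum_u kap k u * v u.
Definition adjm K U (kap : K -> U -> C) : U -> K -> C := fun u k => (kap k u)^*.

Lemma dotv_mxv K U (kap : K -> U -> C) (v : U -> C) (z : K -> C) :
  dotv (mxv kap v) z = dotv v (mxv (adjm kap) z).
Proof.
rewrite /dotv /mxv /adjm; under eq_bigr => k _ do rewrite mulr_suml.
rewrite exchange_big; apply: eq_bigr => u _; rewrite rmorph_sum mulr_sumr.
by apply: eq_bigr => k _; rewrite rmorphM /= conjCK; ring.
Qed.

Definition contraction K U (kap : K -> U -> C) := forall v, nrm2 (mxv kap v) <= nrm2 v.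

Lemma contraction_adjm K U (kap : K -> U -> C) :
  contraction kap -> contraction (adjm kap).
Proof.
move=> kap_contr z; set y := mxv (adjm kap) z.
have yy : nrm2 y = dotv z (mxv kap y) by rewrite dotvC dotv_mxv geC0_conj ?nrm2_ge0.
by rewrite yy; apply: dotv_le_nrm2; rewrite -yy; apply: kap_contr.
Qed.

Definition gram J K (psi : J -> K -> C) j j' := dotv (psi j) (psi j').

Section GramBound.
Variables (J K U : finType) (kap : K -> U -> C) (phi : J -> U -> C).
Hypotheses (kap_contr : contraction kap) (phi_so : suborthonormal phi).
Let G := gram (fun j => mxv kap (phi j)).

Lemma gram_row_bound j : \sum_j' G j j' * (G j j')^* <= G j j.
Proof.
have Gjj' j' : G j j' = dotv (mxv (adjm kap) (mxv kap (phi j))) (phi j').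
  by rewrite dotvC -dotv_mxv -dotvC.
under eq_bigr do rewrite Gjj'.
apply: le_trans (bessel _ phi_so) _.
exact: contraction_adjm.
Qed.

Lemma gram_weighted_bound (w : J -> C) : (forall j, 0 <= w j) ->
  \sum_j \sum_j' w j * w j' * (G j j' * (G j j')^*) <= \sum_j w j ^+ 2 * G j j.
Proof.
move=> w_ge0; pose X j j' := G j j' * (G j j')^*.
have X_ge0 j j' : 0 <= X j j' by apply: mul_conjC_ge0.
have XC j j' : X j' j = X j j'.
  by rewrite /X /G /gram dotvC conjCK mulrC.
(* 2 w w' <= w^2 + w'^2, and the two halves agree by symmetry of X *)
have amgm j j' : w j * w j' * X j j' <= (w j ^+ 2 * X j j' + w j' ^+ 2 * X j j') / 2.
  rewrite ler_pdivlMr ?ltr0n // -subr_ge0.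
  have -> : w j ^+ 2 * X j j' + w j' ^+ 2 * X j j' - w j * w j' * X j j' * 2 =
            (w j - w j') * (w j - w j') * X j j' by rewrite mulr_natr mulr2n; ring.
  by rewrite mulr_ge0 // real_mul_self_ge0 // realB ?ger0_real.
apply: (le_trans (ler_sum _ (fun j _ => ler_sum _ (fun j' _ => amgm j j')))).
have -> : \sum_j \sum_j' (w j ^+ 2 * X j j' + w j' ^+ 2 * X j j') / 2 =
          \sum_j \sum_j' w j ^+ 2 * X j j'.
  under eq_bigr do rewrite -mulr_suml big_split /=.
  rewrite -mulr_suml big_split /= [X in _ + X]exchange_big /=.
  under [X in _ + X]eq_bigr do under eq_bigr do rewrite XC.
  by rewrite -mulr2n -[_ *+ 2]mulr_natr mulfK ?pnatr_eq0.
apply: ler_sum => j _; rewrite -mulr_sumr ler_wpM2l ?exprn_ge0 //.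
exact: gram_row_bound.
Qed.

End GramBound.

End Contractions.

Section Triangle.
Variable C : numClosedFieldType.

Lemma triangle_cauchy_schwarz (X Y Z : finType) (wx : X -> C) (wy : Y -> C) (wz : Z -> C)
    (f : Y -> Z -> C) (g : X -> Z -> C) (h : X -> Y -> C) :
  (forall x, 0 <= wx x) -> (forall y, 0 <= wy y) -> (forall z, 0 <= wz z) ->
  `|\sum_x \sum_y \sum_z wx x * wy y * wz z * f y z * g x z * h x y| ^+ 2 <=
  (\sum_y \sum_z wy y * wz z * (f y z * (f y z)^*)) *
  (\sum_x \sum_z wx x * wz z * (g x z * (g x z)^*)) *
  (\sum_x \sum_y wx x * wy y * (h x y * (h x y)^*)).
Proof.
move=> wx_ge0 wy_ge0 wz_ge0; rewrite normCK.
pose S x y := \sum_z wz z * (f y z * g x z).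
pose F y := \sum_z wz z * (f y z * (f y z)^*).
pose G x := \sum_z wz z * (g x z * (g x z)^*).
have F_ge0 y : 0 <= F y by apply: sumr_ge0 => z _; rewrite mulr_ge0 ?mul_conjC_ge0.
have G_ge0 x : 0 <= G x by apply: sumr_ge0 => z _; rewrite mulr_ge0 ?mul_conjC_ge0.
have S_le x y : S x y * (S x y)^* <= F y * G x.
  have -> : S x y = \sum_z wz z * (f y z * ((g x z)^*)^*).
    by apply: eq_bigr => z _; rewrite conjCK.
  have -> : G x = \sum_z wz z * ((g x z)^* * ((g x z)^*)^*).
    by apply: eq_bigr => z _; rewrite conjCK [_^* * _]mulrC.
  exact: weighted_cauchy_schwarz.
pose w (p : X * Y) := wx p.1 * wy p.2.
have w_ge0 p : 0 <= w p by rewrite mulr_ge0.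
have -> : \sum_x \sum_y \sum_z wx x * wy y * wz z * f y z * g x z * h x y =
          \sum_p w p * (h p.1 p.2 * ((S p.1 p.2)^*)^*).
  rewrite sum_pairE; apply: eq_bigr => x _; apply: eq_bigr => y _.
  rewrite conjCK /S !mulr_sumr; apply: eq_bigr => z _; rewrite /w /=; ring.
have NF : \sum_y \sum_z wy y * wz z * (f y z * (f y z)^*) = \sum_y wy y * F y.
  by apply: eq_bigr => y _; rewrite /F mulr_sumr; apply: eq_bigr => z _; rewrite !mulrA.
have NG : \sum_x \sum_z wx x * wz z * (g x z * (g x z)^*) = \sum_x wx x * G x.
  by apply: eq_bigr => x _; rewrite /G mulr_sumr; apply: eq_bigr => z _; rewrite !mulrA.
have NH : \sum_p w p * (h p.1 p.2 * (h p.1 p.2)^*) =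
          \sum_x \sum_y wx x * wy y * (h x y * (h x y)^*) by rewrite sum_pairE.
have leS : \sum_p w p * ((S p.1 p.2)^* * ((S p.1 p.2)^*)^*) <=
           (\sum_y wy y * F y) * (\sum_x wx x * G x).
  rewrite sum_pairE mulrC big_distrlr /=; apply: ler_sum => x _; apply: ler_sum => y _.
  rewrite /w /= conjCK [_^* * _]mulrC [X in _ <= X]mulrACA ler_wpM2l ?mulr_ge0 //.
  by rewrite [G x * _]mulrC.
rewrite NF NG -NH [X in _ <= X]mulrC.
apply: le_trans (weighted_cauchy_schwarz (fun p => h p.1 p.2) (fun p => (S p.1 p.2)^*) w_ge0) _.
by rewrite ler_wpM2l // sumr_ge0 // => p _; rewrite mulr_ge0 ?mul_conjC_ge0.
Qed.

Lemma dotv_tensor3 (K1 K2 K3 : finType) (u1 v1 : K1 -> C) (u2 v2 : K2 -> C) (u3 v3 : K3 -> C) :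
  dotv (fun k : K1 * K2 * K3 => u1 k.1.1 * u2 k.1.2 * u3 k.2)
       (fun k => v1 k.1.1 * v2 k.1.2 * v3 k.2) =
  dotv u1 v1 * dotv u2 v2 * dotv u3 v3.
Proof.
rewrite /dotv !sum_pairE big_distrlr mulr_suml; apply: eq_bigr => k1 _.
rewrite mulr_suml; apply: eq_bigr => k2 _; rewrite mulr_sumr; apply: eq_bigr => k3 _ /=.
by rewrite !rmorphM /=; ring.
Qed.

Definition gram_mass (R1 R2 K : finType) (w1 : R1 -> C) (w2 : R2 -> C)
    (psi : R1 * R2 -> K -> C) :=
  \sum_I \sum_I' w1 I.1 * w2 I.2 * (w1 I'.1 * w2 I'.2) * (gram psi I I' * (gram psi I I')^*).

Lemma gram_massE (R1 R2 K : finType) (w1 : R1 -> C) (w2 : R2 -> C) (psi : R1 * R2 -> K -> C) :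
  gram_mass w1 w2 psi = \sum_(y : R1 * R1) \sum_(z : R2 * R2)
    w1 y.1 * w1 y.2 * (w2 z.1 * w2 z.2) *
    (gram psi (y.1, z.1) (y.2, z.2) * (gram psi (y.1, z.1) (y.2, z.2))^*).
Proof.
rewrite (sum_pairs_transpose (fun i i' j j' =>
  w1 i * w1 i' * (w2 j * w2 j') * (gram psi (i, j) (i', j') * (gram psi (i, j) (i', j'))^*))).
by apply: eq_bigr => -[i j] _; apply: eq_bigr => -[i' j'] _ /=; rewrite (mulrACA (w1 i)).
Qed.

Definition gram_diag (R1 R2 K : finType) (w1 : R1 -> C) (w2 : R2 -> C)
    (psi : R1 * R2 -> K -> C) :=
  \sum_I (w1 I.1 * w2 I.2) ^+ 2 * nrm2 (psi I).

Lemma gram_mass_ge0 (R1 R2 K : finType) (w1 : R1 -> C) (w2 : R2 -> C) (psi : R1 * R2 -> K -> C) :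
  (forall r, 0 <= w1 r) -> (forall r, 0 <= w2 r) -> 0 <= gram_mass w1 w2 psi.
Proof.
move=> w1_ge0 w2_ge0; apply: sumr_ge0 => I _; apply: sumr_ge0 => I' _.
by apply: mulr_ge0; [rewrite !mulr_ge0 | apply: mul_conjC_ge0].
Qed.

Lemma gram_diag_ge0 (R1 R2 K : finType) (w1 : R1 -> C) (w2 : R2 -> C) (psi : R1 * R2 -> K -> C) :
  (forall r, 0 <= w1 r) -> (forall r, 0 <= w2 r) -> 0 <= gram_diag w1 w2 psi.
Proof.
by move=> w1_ge0 w2_ge0; apply: sumr_ge0 => I _; rewrite mulr_ge0 ?exprn_ge0 ?mulr_ge0 ?nrm2_ge0.
Qed.

Lemma gram_mass_le_diag (R1 R2 K U : finType) (w1 : R1 -> C) (w2 : R2 -> C)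
    (kap : K -> U -> C) (phi : R1 * R2 -> U -> C) :
  (forall r, 0 <= w1 r) -> (forall r, 0 <= w2 r) -> contraction kap -> suborthonormal phi ->
  gram_mass w1 w2 (fun I => mxv kap (phi I)) <= gram_diag w1 w2 (fun I => mxv kap (phi I)).
Proof.
move=> w1_ge0 w2_ge0 kap_contr phi_so.
exact: gram_weighted_bound kap_contr phi_so (fun I => w1 I.1 * w2 I.2) (fun I => mulr_ge0 _ _).
Qed.

Section TriangleAmplitude.
Variables (Ra Rb Rc KA KB KC : finType) (wa : Ra -> C) (wb : Rb -> C) (wc : Rc -> C).
Hypotheses (wa_ge0 : forall a, 0 <= wa a) (wb_ge0 : forall b, 0 <= wb b)
  (wc_ge0 : forall c, 0 <= wc c).
Variables (fA : Rb * Rc -> KA -> C) (fB : Ra * Rc -> KB -> C) (fC : Ra * Rb -> KC -> C).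

Definition diag_triangle_amp (k : KA * KB * KC) :=
  \sum_a \sum_b \sum_c wa a * wb b * wc c * (fA (b, c) k.1.1 * fB (a, c) k.1.2 * fC (a, b) k.2).

Lemma nrm2_diag_triangle_amp : nrm2 diag_triangle_amp =
  \sum_(x : Ra * Ra) \sum_(y : Rb * Rb) \sum_(z : Rc * Rc)
    (wa x.1 * wa x.2) * (wb y.1 * wb y.2) * (wc z.1 * wc z.2) *
    gram fA (y.1, z.1) (y.2, z.2) * gram fB (x.1, z.1) (x.2, z.2) * gram fC (x.1, y.1) (x.2, y.2).
Proof.
rewrite -(sum_pairs_interleave (fun a b c a' b' c' =>
  wa a * wa a' * (wb b * wb b') * (wc c * wc c') *
  gram fA (b, c) (b', c') * gram fB (a, c) (a', c') * gram fC (a, b) (a', b'))).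
rewrite /nrm2 /diag_triangle_amp dotv_sum3; do 6!(apply: eq_bigr => ? _).
by rewrite dotv_tensor3 !rmorphM /= !geC0_conj // /gram; ring.
Qed.

Lemma diag_triangle_amp_finner : nrm2 diag_triangle_amp ^+ 2 <=
  gram_mass wb wc fA * gram_mass wa wc fB * gram_mass wa wb fC.
Proof.
have w2_ge0 (R : finType) (w : R -> C) : (forall r, 0 <= w r) ->
    forall r : R * R, 0 <= w r.1 * w r.2.
  by move=> w_ge0 r; rewrite mulr_ge0.
rewrite -(ger0_norm (nrm2_ge0 _)) nrm2_diag_triangle_amp !gram_massE.
exact: triangle_cauchy_schwarz (w2_ge0 _ _ wa_ge0) (w2_ge0 _ _ wb_ge0) (w2_ge0 _ _ wc_ge0).
Qed.

End TriangleAmplitude.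

End Triangle.

Section ScalarBound.
Variable C : numClosedFieldType.

Lemma amgm3 (x y z : C) : 0 <= x -> 0 <= y -> 0 <= z ->
  27 * (x * y * z) <= (x + y + z) ^+ 3.
Proof.
move=> x_ge0 y_ge0 z_ge0; rewrite -subr_ge0.
have sq_ge0 (u v : C) : 0 <= u -> 0 <= v -> 0 <= (u - v) * (u - v).
  by move=> u_ge0 v_ge0; rewrite real_mul_self_ge0 // realB ?ger0_real.
have wsq_ge0 (t u v : C) : 0 <= t -> 0 <= u -> 0 <= v -> 0 <= t * ((u - v) * (u - v)).
  by move=> t_ge0 u_ge0 v_ge0; rewrite mulr_ge0 ?sq_ge0.
have -> : (x + y + z) ^+ 3 - 27 * (x * y * z) =
   (x + y + z) * ((x - y) * (x - y) + (y - z) * (y - z) + (z - x) * (z - x)) / 2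
   + 3 * (y * ((x - z) * (x - z)) + x * ((y - z) * (y - z)) + z * ((x - y) * (x - y))).
  by field.
apply: addr_ge0; apply: mulr_ge0; rewrite ?invr_ge0 ?ler0n //.
  by rewrite mulr_ge0 ?addr_ge0 ?sq_ge0.
by rewrite !addr_ge0 ?wsq_ge0.
Qed.

(* The tangent line of m |-> m^(3/4) at m = 1/2, raised to the fourth power. *)
Lemma tangent_bound (m : C) : 0 <= m -> 2048 * m ^+ 3 <= (6 * m + 1) ^+ 4.
Proof.
move=> m_ge0; rewrite -subr_ge0.
have -> : (6 * m + 1) ^+ 4 - 2048 * m ^+ 3 =
          ((2 * m - 1) * (2 * m - 1)) * (324 * (m * m) + 28 * m + 1) by ring.
have sq_ge0 : 0 <= (2 * m - 1) * (2 * m - 1).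
  by rewrite real_mul_self_ge0 // realB ?real1 ?ger0_real ?mulr_ge0 ?ler0n.
by rewrite mulr_ge0 // !addr_ge0 ?ler01 // !mulr_ge0 ?ler0n.
Qed.

Lemma sqrtC_tangent_bound (p x y z : C) : 0 <= p -> 0 <= x -> 0 <= y -> 0 <= z ->
  p ^+ 2 <= x * y * z -> sqrtC p <= sqrtC (sqrtC 2) * (2 * (x + y + z) + 1) / 8.
Proof.
move=> p_ge0 x_ge0 y_ge0 z_ge0 le_p_xyz.
set w := sqrtC (sqrtC 2); set m := (x + y + z) / 3.
have w_ge0 : 0 <= w by rewrite !sqrtC_ge0 ler0n.
have m_ge0 : 0 <= m by rewrite divr_ge0 ?addr_ge0 ?ler0n.
have pow4 (u : C) : u ^+ 4 = (u ^+ 2) ^+ 2 by rewrite -exprM.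
rewrite -(ler_pXn2r (_ : 0 < 4)%N) ?qualifE /= ?sqrtC_ge0 //; last first.
  by rewrite divr_ge0 ?ler0n // mulr_ge0 // addr_ge0 ?ler01 // mulr_ge0 ?ler0n ?addr_ge0.
rewrite pow4 sqrtCK (le_trans le_p_xyz) //.
have le_xyz_m : x * y * z <= m ^+ 3.
  rewrite -(ler_pM2l (_ : 0 < 27)) ?ltr0n //.
  have -> : 27 * m ^+ 3 = (x + y + z) ^+ 3 by rewrite /m; field.
  exact: amgm3.
apply: (le_trans le_xyz_m); rewrite -(ler_pM2l (_ : 0 < 2048)) ?ltr0n //.
have w4 : w ^+ 4 = 2 by rewrite pow4 !sqrtCK.
have -> : 2048 * (w * (2 * (x + y + z) + 1) / 8) ^+ 4 = (6 * m + 1) ^+ 4.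
  by rewrite !exprMn w4 /m; field.
exact: tangent_bound.
Qed.

Lemma cross_term_bound (p0 p1 c : C) : 0 <= p0 -> 0 <= p1 -> c * c^* <= p0 * p1 ->
  p0 + p1 + c + c^* <= (sqrtC p0 + sqrtC p1) ^+ 2.
Proof.
move=> p0_ge0 p1_ge0 le_c.
have le_norm_c : `|c| <= sqrtC p0 * sqrtC p1.
  rewrite -(ler_pXn2r (_ : 0 < 2)%N) ?qualifE /= ?mulr_ge0 ?sqrtC_ge0 //.
  by rewrite normCK exprMn !sqrtCK.
have c_re : c + c^* <= 2 * (sqrtC p0 * sqrtC p1).
  have c_real : c + c^* \is Num.real by apply/CrealP; rewrite rmorphD /= conjCK addrC.
  apply: le_trans (real_ler_norm c_real) _; apply: le_trans (ler_normD _ _) _.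
  by rewrite norm_conjC -mulr2n -[`|c| *+ 2]mulr_natl ler_wpM2l ?ler0n.
by rewrite -addrA sqrrD !sqrtCK addrAC lerD2r lerD2l -mulr_natl.
Qed.

Lemma finner_scalar_bound (p0 p1 c x0 y0 z0 x1 y1 z1 : C) :
  0 <= p0 -> 0 <= p1 -> c * c^* <= p0 * p1 ->
  0 <= x0 -> 0 <= y0 -> 0 <= z0 -> 0 <= x1 -> 0 <= y1 -> 0 <= z1 ->
  x0 + x1 <= 1 -> y0 + y1 <= 1 -> z0 + z1 <= 1 ->
  p0 ^+ 2 <= x0 * y0 * z0 -> p1 ^+ 2 <= x1 * y1 * z1 ->
  p0 + p1 + c + c^* <= sqrtC 2.
Proof.
move=> p0_ge0 p1_ge0 le_c x0_ge0 y0_ge0 z0_ge0 x1_ge0 y1_ge0 z1_ge0 le_x le_y le_z le_p0 le_p1.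
apply: le_trans (cross_term_bound p0_ge0 p1_ge0 le_c) _.
pose w : C := sqrtC (sqrtC 2).
have w_ge0 : 0 <= w by rewrite !sqrtC_ge0 ler0n.
have -> : sqrtC 2 = w ^+ 2 by rewrite sqrtCK.
rewrite ler_pXn2r ?qualifE /= ?addr_ge0 ?sqrtC_ge0 //.
apply: le_trans (lerD (sqrtC_tangent_bound p0_ge0 x0_ge0 y0_ge0 z0_ge0 le_p0)
                      (sqrtC_tangent_bound p1_ge0 x1_ge0 y1_ge0 z1_ge0 le_p1)) _.
rewrite -mulrDl -mulrDr ler_pdivrMr ?ltr0n // ler_wpM2l //.
have -> : 2 * (x0 + y0 + z0) + 1 + (2 * (x1 + y1 + z1) + 1) =
          2 * ((x0 + x1) + (y0 + y1) + (z0 + z1)) + 2 by ring.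
have -> : 8 = 2 * (1 + 1 + 1) + 2 :> C by ring.
by rewrite lerD2r ler_pM2l ?ltr0n // !lerD.
Qed.

End ScalarBound.

Section Spectral.
Variable I : finType.
Implicit Type A : op I.
Local Open Scope sesquilinear_scope.

Lemma hermitian_spectral A : (forall i j, A j i = (A i j)^*) ->
  exists (d : 'I_#|I| -> algC) (e : 'I_#|I| -> I -> algC),
  [/\ forall r r', dotv (e r) (e r') = (r == r')%:R,
      forall i j, \sum_r e r i * (e r j)^* = (i == j)%:R &
      forall i j, A i j = \sum_r d r * e r i * (e r j)^*].
Proof.
move=> A_herm.
pose M : 'M[algC]_#|I| := \matrix_(x, y) A (enum_val x) (enum_val y).
have M_herm : M \is hermsymmx.
  apply/is_hermitianmxP; rewrite expr0 scale1r.
  by apply/matrixP => x y; rewrite !mxE A_herm.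
have /orthomx_spectralP ME := hermitian_normalmx M_herm.
set P := spectralmx M in ME; set D := spectral_diag M in ME.
have P_unitary : P \is unitarymx := spectral_unitarymx M.
have PPt : P *m P^t* = 1%:M by apply/unitarymxP.
have PtP : P^t* *m P = 1%:M by apply: mulmx1C.
rewrite invmx_unitary // in ME.
pose e r i := (P r (enum_rank i))^*.
exists (fun r => D 0 r), e; split.
- move=> r r'; have := congr1 (fun N : 'M_#|I| => N r' r) PPt.
  rewrite !mxE eq_sym => <-; rewrite /dotv (reindex (@enum_val _ (mem I))) /=; last first.
    by exists enum_rank => x _; rewrite ?enum_valK ?enum_rankK.
  by apply: eq_bigr => x _; rewrite /e enum_valK conjCK !mxE mulrC.
- move=> i j; have := congr1 (fun N : 'M_#|I| => N (enum_rank i) (enum_rank j)) PtP.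
  rewrite !mxE (inj_eq enum_rank_inj) => <-.
  by apply: eq_bigr => r _; rewrite /e !mxE conjCK.
- move=> i j; have := congr1 (fun N : 'M_#|I| => N (enum_rank i) (enum_rank j)) ME.
  rewrite /= mxE !enum_rankK => ->; rewrite mxE; apply: eq_bigr => r _.
  by rewrite mul_mx_diag !mxE /e conjCK [_ * D 0 r]mulrC.
Qed.

Lemma psd_spectral A : psd A ->
  exists (d : 'I_#|I| -> algC) (e : 'I_#|I| -> I -> algC),
  [/\ forall r, 0 <= d r,
      forall r r', dotv (e r) (e r') = (r == r')%:R,
      forall i j, \sum_r e r i * (e r j)^* = (i == j)%:R &
      forall i j, A i j = \sum_r d r * e r i * (e r j)^*].
Proof.
move=> [A_herm A_pos]; have [d [e [e_orth e_compl AE]]] := hermitian_spectral A_herm.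
exists d, e; split=> // r.
suff -> : d r = \sum_i \sum_j (e r i)^* * A i j * e r j by apply: A_pos.
transitivity (\sum_q d q * dotv (e q) (e r) * dotv (e r) (e q)).
  rewrite (bigD1 r) //= big1 ?addr0 => [|q /negbTE nq]; last by rewrite e_orth nq mulr0 mul0r.
  by rewrite e_orth eqxx mulr1 mulr1.
rewrite /dotv; under eq_bigr do rewrite -mulrA big_distrlr /= mulr_sumr.
rewrite exchange_big; apply: eq_bigr => i _; under eq_bigr do rewrite mulr_sumr.
rewrite exchange_big; apply: eq_bigr => j _; rewrite AE mulr_sumr mulr_suml.
by apply: eq_bigr => q _; ring.
Qed.

Lemma density_spectral A : density A ->
  exists (d : 'I_#|I| -> algC) (e : 'I_#|I| -> I -> algC),
  [/\ forall r, 0 <= d r, forall r, nrm2 (e r) = 1, \sum_r d r = 1 &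
      forall i j, A i j = \sum_r d r * e r i * (e r j)^*].
Proof.
move=> [A_psd A_tr]; have [d [e [d_ge0 e_orth _ AE]]] := psd_spectral A_psd.
have e_nrm1 r : nrm2 (e r) = 1 by rewrite /nrm2 e_orth eqxx.
exists d, e; split=> //; rewrite -A_tr; under [RHS]eq_bigr do rewrite AE.
rewrite exchange_big; apply: eq_bigr => r _.
by rewrite -[LHS]mulr1 -(e_nrm1 r) mulr_sumr; apply: eq_bigr => i _; rewrite mulrA.
Qed.

End Spectral.

Lemma reduced_psd (X1 X2 : finType) (alpha : X1 * X2 -> algC) :
  psd (fun i i' => dotv (fun j => alpha (i, j)) (fun j => alpha (i', j))).
Proof.
split=> [i i'|v]; first exact: dotvC.
have -> : \sum_i \sum_i' (v i)^* * dotv (fun j => alpha (i, j)) (fun j => alpha (i', j)) * v i' =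
          nrm2 (fun j => \sum_i (v i)^* * alpha (i, j)).
  rewrite /nrm2 dotv_suml; apply: eq_bigr => i _; rewrite dotvZl dotv_sumr mulr_sumr.
  by apply: eq_bigr => i' _; rewrite dotvZr conjCK; ring.
exact: nrm2_ge0.
Qed.

Section Schmidt.
Variables (X1 X2 : finType) (alpha : X1 * X2 -> algC) (n : nat).
Variables (d : 'I_n -> algC) (e : 'I_n -> X1 -> algC).
Hypotheses (d_ge0 : forall r, 0 <= d r)
  (e_orth : forall r r', dotv (e r) (e r') = (r == r')%:R)
  (e_compl : forall i i', \sum_r e r i * (e r i')^* = (i == i')%:R)
  (reducedE : forall i i', dotv (fun j => alpha (i, j)) (fun j => alpha (i', j)) =
                           \sum_r d r * e r i * (e r i')^*).

Definition schmidt_coef r j := \sum_i (e r i)^* * alpha (i, j).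
(* For [d r = 0] the junk value [0^-1 = 0] makes this vector vanish, which is why
   [suborthonormal] only asks for norms at most one. *)
Definition schmidt_vec r j := (sqrtC (d r))^-1 * schmidt_coef r j.

Lemma dotv_schmidt_coef r r' :
  dotv (schmidt_coef r) (schmidt_coef r') = (r == r')%:R * d r.
Proof.
rewrite /schmidt_coef dotv_suml.
transitivity (\sum_i \sum_i' (e r i)^* * e r' i' * \sum_q d q * e q i * (e q i')^*).
  apply: eq_bigr => i _; rewrite dotvZl dotv_sumr mulr_sumr; apply: eq_bigr => i' _.
  by rewrite dotvZr reducedE conjCK; ring.
transitivity (\sum_q d q * dotv (e q) (e r) * dotv (e r') (e q)).
  rewrite /dotv; under [RHS]eq_bigr do rewrite -mulrA big_distrlr /= mulr_sumr.
  rewrite [RHS]exchange_big; apply: eq_bigr => i _; under [RHS]eq_bigr do rewrite mulr_sumr.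
  rewrite [RHS]exchange_big; apply: eq_bigr => i' _; rewrite mulr_sumr.
  by apply: eq_bigr => q _; ring.
rewrite (bigD1 r) //= big1 ?addr0 => [|q /negbTE nq]; last by rewrite e_orth nq mulr0 mul0r.
by rewrite !e_orth eqxx mulr1 mulrC eq_sym.
Qed.

Lemma schmidt_vecK r j : sqrtC (d r) * schmidt_vec r j = schmidt_coef r j.
Proof.
have [dr0|dr_neq0] := eqVneq (d r) 0; last by rewrite /schmidt_vec mulVKf ?sqrtC_eq0.
have /nrm2_eq0 -> : nrm2 (schmidt_coef r) = 0 by rewrite /nrm2 dotv_schmidt_coef eqxx dr0 mulr0.
by rewrite dr0 sqrtC0 mul0r.
Qed.

Lemma suborthonormal_schmidt_vec : suborthonormal schmidt_vec.
Proof.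
have vecE r r' : dotv (schmidt_vec r) (schmidt_vec r') = (r == r')%:R * (d r != 0)%:R.
  rewrite /schmidt_vec dotvZl dotvZr dotv_schmidt_coef geC0_conj ?invr_ge0 ?sqrtC_ge0 ?d_ge0 //.
  case: eqP => [<-|_]; last by rewrite !mul0r !mulr0.
  have [->|dr_neq0] := eqVneq (d r) 0; first by rewrite !mulr0.
  by rewrite /= mul1r mulrA -invfM -expr2 sqrtCK mulVf ?mulr1.
split=> [r r'|r]; first by rewrite /nrm2 !vecE eqxx mul1r.
by rewrite /nrm2 vecE eqxx mul1r; case: (d r != 0); rewrite ?ler01.
Qed.

Lemma schmidt_expansion i j :
  alpha (i, j) = \sum_r sqrtC (d r) * e r i * schmidt_vec r j.
Proof.
under eq_bigr do rewrite mulrAC schmidt_vecK.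
transitivity (\sum_i' (\sum_r e r i * (e r i')^*) * alpha (i', j)).
  rewrite (bigD1 i) //= e_compl eqxx mul1r big1 ?addr0 // => i' ni.
  by rewrite e_compl eq_sym (negbTE ni) mul0r.
under eq_bigr do rewrite mulr_suml.
rewrite exchange_big; apply: eq_bigr => r _; rewrite /schmidt_coef mulr_suml.
by apply: eq_bigr => i' _; ring.
Qed.

Lemma schmidt_sqr_sum : \sum_r sqrtC (d r) ^+ 2 = nrm2 alpha.
Proof.
under eq_bigr do rewrite sqrtCK.
rewrite /nrm2 /dotv sum_pairE.
transitivity (\sum_i \sum_r d r * e r i * (e r i)^*); last first.
  by apply: eq_bigr => i _; rewrite -reducedE.
rewrite exchange_big; apply: eq_bigr => r _.
have e_nrm1 : dotv (e r) (e r) = 1 by rewrite e_orth eqxx.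
by rewrite -[LHS]mulr1 -e_nrm1 mulr_sumr; apply: eq_bigr => i _; rewrite mulrA.
Qed.

End Schmidt.

Lemma schmidt_decomposition (X1 X2 : finType) (alpha : X1 * X2 -> algC) :
  exists (s : 'I_#|X1| -> algC) (e : 'I_#|X1| -> X1 -> algC) (f : 'I_#|X1| -> X2 -> algC),
  [/\ forall r, 0 <= s r, suborthonormal e, suborthonormal f,
      forall i, alpha i = \sum_r s r * e r i.1 * f r i.2 &
      \sum_r s r ^+ 2 = nrm2 alpha].
Proof.
have [d [e [d_ge0 e_orth e_compl reducedE]]] := psd_spectral (reduced_psd alpha).

exists (fun r => sqrtC (d r)), e, (schmidt_vec alpha d e); split.
- by move=> r; rewrite sqrtC_ge0 d_ge0.
- by split=> [r r'|r]; rewrite /nrm2 !e_orth ?eqxx /= ?mulr1.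
- exact: suborthonormal_schmidt_vec.
- by move=> [i j]; apply: schmidt_expansion.
- exact: schmidt_sqr_sum.
Qed.

Section Kraus.
Variables (K J U : finType) (kr : K -> J -> U -> algC).
Hypothesis kr_tp : forall u u', \sum_k \sum_j (kr k j u)^* * kr k j u' = (u == u')%:R.

Lemma kraus_isometry (v : U -> algC) : \sum_j nrm2 (mxv (kr^~ j) v) = nrm2 v.
Proof.
have cols_on u u' : dotv (fun p : K * J => kr p.1 p.2 u) (fun p => kr p.1 p.2 u') = (u == u')%:R.
  rewrite -[RHS]conjC_nat -kr_tp rmorph_sum /dotv sum_pairE; apply: eq_bigr => k _.
  by rewrite rmorph_sum; apply: eq_bigr => j _; rewrite rmorphM /= conjCK mulrC.
rewrite -(nrm2_orthonormal_sum v cols_on) /nrm2 /dotv sum_pairE exchange_big.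
apply: eq_bigr => j _; apply: eq_bigr => k _ /=.
by congr (_ * _^*); apply: eq_bigr => u _; rewrite mulrC.
Qed.

Lemma kraus_row_contraction j : contraction (kr^~ j).
Proof.
move=> v; rewrite -(kraus_isometry v) (bigD1 j) //= lerDl.
by apply: sumr_ge0 => j' _; apply: nrm2_ge0.
Qed.

Lemma kraus_gram_diag_sum (R1 R2 : finType) (w1 : R1 -> algC) (w2 : R2 -> algC)
    (phi : R1 * R2 -> U -> algC) :
  (forall r, 0 <= w1 r) -> (forall r, 0 <= w2 r) -> suborthonormal phi ->
  \sum_j gram_diag w1 w2 (fun I => mxv (kr^~ j) (phi I)) <=
  (\sum_r w1 r ^+ 2) * (\sum_r w2 r ^+ 2).
Proof.
move=> w1_ge0 w2_ge0 [_ phi_le1]; rewrite /gram_diag exchange_big big_distrlr /= sum_pairE.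
apply: ler_sum => r1 _; apply: ler_sum => r2 _ /=.
by rewrite -mulr_sumr kraus_isometry -exprMn ler_piMr ?exprn_ge0 ?mulr_ge0.
Qed.

End Kraus.

Lemma kraus_munit (I J K : finType) (E : op I -> op J) (kr : K -> J -> I -> algC) :
  (forall rho j j', E rho j j' = \sum_k \sum_i \sum_i' kr k j i * rho i i' * (kr k j' i')^*) ->
  forall u u' j j', E (munit u u') j j' = dotv (fun k => kr k j u) (fun k => kr k j' u').
Proof.
move=> EE u u' j j'; rewrite EE; apply: eq_bigr => k _.
rewrite (bigD1 u) //= [X in _ + X]big1 ?addr0 => [|i /negbTE ni]; last first.
  by apply: big1 => i' _; rewrite /munit ni mulr0 mul0r.
rewrite (bigD1 u') //= big1 ?addr0 => [|i' /negbTE ni'].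
  by rewrite /munit !eqxx mulr1.
by rewrite /munit ni' andbF mulr0 mul0r.
Qed.

Definition ketbra (I : finType) (v : I -> algC) : op I := fun i i' => v i * (v i')^*.

Definition triangle_amp (A1 A2 B1 B2 C1 C2 KA KB KC : finType)
    (kA : KA -> B1 * C1 -> algC) (kB : KB -> A1 * C2 -> algC) (kC : KC -> A2 * B2 -> algC)
    (al : A1 * A2 -> algC) (be : B1 * B2 -> algC) (ga : C1 * C2 -> algC) (k : KA * KB * KC) :=
  \sum_ia \sum_ib \sum_ic al ia * be ib * ga ic *
    (kA k.1.1 (ib.1, ic.1) * kB k.1.2 (ia.1, ic.2) * kC k.2 (ia.2, ib.2)).

Section TriangleOutput.
Variables (A1 A2 B1 B2 C1 C2 : finType).
Variables (EA : op (B1 * C1)%type -> op qubit) (EB : op (A1 * C2)%type -> op qubit)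
  (EC : op (A2 * B2)%type -> op qubit).

Definition triangle_kernel (x x' : qubit3) (a : (A1 * A2) * (A1 * A2))
    (b : (B1 * B2) * (B1 * B2)) (c : (C1 * C2) * (C1 * C2)) :=
  EA (munit (b.1.1, c.1.1) (b.2.1, c.2.1)) x.1.1 x'.1.1 *
  EB (munit (a.1.1, c.1.2) (a.2.1, c.2.2)) x.1.2 x'.1.2 *
  EC (munit (a.1.2, b.1.2) (a.2.2, b.2.2)) x.2 x'.2.

Lemma triangle_outE ra rb rc x x' :
  triangle_out ra rb rc EA EB EC x x' =
  \sum_a \sum_b \sum_c ra a.1 a.2 * rb b.1 b.2 * rc c.1 c.2 * triangle_kernel x x' a b c.
Proof.
rewrite /triangle_out [RHS]sum_pairE; apply: eq_bigr => ia _; apply: eq_bigr => ia' _.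
rewrite [RHS]sum_pairE; apply: eq_bigr => ib _; apply: eq_bigr => ib' _.
rewrite [RHS]sum_pairE; apply: eq_bigr => ic _; apply: eq_bigr => ic' _.
by rewrite /triangle_kernel !mulrA.
Qed.

Lemma triangle_out_mixture (Ma Mb Mc : finType)
    (da : Ma -> algC) (va : Ma -> A1 * A2 -> algC) (db : Mb -> algC) (vb : Mb -> B1 * B2 -> algC)
    (dc : Mc -> algC) (vc : Mc -> C1 * C2 -> algC) ra rb rc :
  (forall i i', ra i i' = \sum_m da m * va m i * (va m i')^*) ->
  (forall i i', rb i i' = \sum_m db m * vb m i * (vb m i')^*) ->
  (forall i i', rc i i' = \sum_m dc m * vc m i * (vc m i')^*) ->
  forall x x', triangle_out ra rb rc EA EB EC x x' =
  \sum_(m : Ma * Mb * Mc) da m.1.1 * db m.1.2 * dc m.2 *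
    triangle_out (ketbra (va m.1.1)) (ketbra (vb m.1.2)) (ketbra (vc m.2)) EA EB EC x x'.
Proof.
move=> raE rbE rcE x x'; rewrite triangle_outE [RHS]sum_tripleE.
under eq_bigr => a _ do under eq_bigr => b _ do under eq_bigr => c _ do
  rewrite raE rbE rcE sum3_mul mulr_sum3l.
rewrite exchange_big3; do 3!(apply: eq_bigr => ? _).
rewrite triangle_outE mulr_sum3r; do 3!(apply: eq_bigr => ? _).
by rewrite /ketbra; ring.
Qed.

Variables (KA KB KC : finType) (kA : KA -> qubit -> B1 * C1 -> algC)
  (kB : KB -> qubit -> A1 * C2 -> algC) (kC : KC -> qubit -> A2 * B2 -> algC).
Hypotheses
  (EA_kraus : forall rho j j',
     EA rho j j' = \sum_k \sum_i \sum_i' kA k j i * rho i i' * (kA k j' i')^*)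
  (EB_kraus : forall rho j j',
     EB rho j j' = \sum_k \sum_i \sum_i' kB k j i * rho i i' * (kB k j' i')^*)
  (EC_kraus : forall rho j j',
     EC rho j j' = \sum_k \sum_i \sum_i' kC k j i * rho i i' * (kC k j' i')^*).

Lemma triangle_out_pure al be ga :
  forall x x', triangle_out (ketbra al) (ketbra be) (ketbra ga) EA EB EC x x' =
  dotv (triangle_amp (kA^~ x.1.1) (kB^~ x.1.2) (kC^~ x.2) al be ga)
       (triangle_amp (kA^~ x'.1.1) (kB^~ x'.1.2) (kC^~ x'.2) al be ga).
Proof.
move=> x x'; rewrite triangle_outE /triangle_amp dotv_sum3 sum_pairs_interleave.
do 3!(apply: eq_bigr => ? _).
rewrite /triangle_kernel (kraus_munit EA_kraus) (kraus_munit EB_kraus).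
rewrite (kraus_munit EC_kraus) /dotv sum3_mul [in RHS]sum_tripleE !mulr_sum3r.
by do 3!(apply: eq_bigr => ? _); rewrite /ketbra !rmorphM /=; ring.
Qed.

End TriangleOutput.

Section SchmidtAmplitude.
Variables (A1 A2 B1 B2 C1 C2 KA KB KC : finType).
Variables (kA : KA -> B1 * C1 -> algC) (kB : KB -> A1 * C2 -> algC) (kC : KC -> A2 * B2 -> algC).

Lemma triangle_amp_tensor (e1 : A1 -> algC) (f1 : A2 -> algC) (e2 : B1 -> algC) (f2 : B2 -> algC)
    (e3 : C1 -> algC) (f3 : C2 -> algC) k :
  triangle_amp kA kB kC (fun i => e1 i.1 * f1 i.2) (fun i => e2 i.1 * f2 i.2)
    (fun i => e3 i.1 * f3 i.2) k =
  mxv kA (fun u => e2 u.1 * e3 u.2) k.1.1 * mxv kB (fun u => e1 u.1 * f3 u.2) k.1.2 *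
  mxv kC (fun u => f1 u.1 * f2 u.2) k.2.
Proof.
rewrite /mxv sum3_mul.
transitivity (\sum_(q : (A1 * A2) * (B1 * B2) * (C1 * C2))
  e1 q.1.1.1 * f1 q.1.1.2 * (e2 q.1.2.1 * f2 q.1.2.2) * (e3 q.2.1 * f3 q.2.2) *
  (kA k.1.1 (q.1.2.1, q.2.1) * kB k.1.2 (q.1.1.1, q.2.2) * kC k.2 (q.1.1.2, q.1.2.2))).
  by rewrite sum_tripleE.
(* regroup the six source indices by the party that receives them *)
rewrite (reindex (fun w : (B1 * C1) * (A1 * C2) * (A2 * B2) =>
  ((w.1.2.1, w.2.1), (w.1.1.1, w.2.2), (w.1.1.2, w.1.2.2)))) /=; last first.
  exists (fun q => ((q.1.2.1, q.2.1), (q.1.1.1, q.2.2), (q.1.1.2, q.1.2.2))).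
    by move=> [[[? ?] [? ?]] [? ?]].
  by move=> [[[? ?] [? ?]] [? ?]].
by rewrite sum_tripleE; do 3!(apply: eq_bigr => -[? ?] _); rewrite /=; ring.
Qed.

Variables (Ra Rb Rc : finType).
Variables (sa : Ra -> algC) (ea : Ra -> A1 -> algC) (fa : Ra -> A2 -> algC).
Variables (sb : Rb -> algC) (eb : Rb -> B1 -> algC) (fb : Rb -> B2 -> algC).
Variables (sc : Rc -> algC) (ec : Rc -> C1 -> algC) (fc : Rc -> C2 -> algC).

Lemma triangle_amp_schmidt al be ga k :
  (forall i, al i = \sum_r sa r * ea r i.1 * fa r i.2) ->
  (forall i, be i = \sum_r sb r * eb r i.1 * fb r i.2) ->
  (forall i, ga i = \sum_r sc r * ec r i.1 * fc r i.2) ->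
  triangle_amp kA kB kC al be ga k =
  diag_triangle_amp sa sb sc (fun I => mxv kA (tensorf eb ec I)) (fun I => mxv kB (tensorf ea fc I))
    (fun I => mxv kC (tensorf fa fb I)) k.
Proof.
move=> alE beE gaE; rewrite /triangle_amp.
under eq_bigr => ia _ do under eq_bigr => ib _ do under eq_bigr => ic _ do
  rewrite alE beE gaE sum3_mul mulr_sum3l.
rewrite exchange_big3 /diag_triangle_amp; do 3!(apply: eq_bigr => ? _).
rewrite -triangle_amp_tensor /triangle_amp mulr_sum3r; do 3!(apply: eq_bigr => ? _).
by ring.
Qed.

End SchmidtAmplitude.

Lemma sum_qubit (F : qubit -> algC) : \sum_j F j = F ord0 + F ord_max.
Proof. by rewrite big_ord_recl big_ord1; congr (_ + F _); apply: val_inj. Qed.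

Section PureTriangle.
Variables (A1 A2 B1 B2 C1 C2 KA KB KC : finType).
Variables (kA : KA -> qubit -> B1 * C1 -> algC) (kB : KB -> qubit -> A1 * C2 -> algC)
  (kC : KC -> qubit -> A2 * B2 -> algC).
Hypotheses (kA_tp : forall u u', \sum_k \sum_j (kA k j u)^* * kA k j u' = (u == u')%:R)
  (kB_tp : forall u u', \sum_k \sum_j (kB k j u)^* * kB k j u' = (u == u')%:R)
  (kC_tp : forall u u', \sum_k \sum_j (kC k j u)^* * kC k j u' = (u == u')%:R).
Variables (Ra Rb Rc : finType).
Variables (sa : Ra -> algC) (ea : Ra -> A1 -> algC) (fa : Ra -> A2 -> algC).
Variables (sb : Rb -> algC) (eb : Rb -> B1 -> algC) (fb : Rb -> B2 -> algC).
Variables (sc : Rc -> algC) (ec : Rc -> C1 -> algC) (fc : Rc -> C2 -> algC).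
Hypotheses (sa_ge0 : forall r, 0 <= sa r) (sb_ge0 : forall r, 0 <= sb r)
  (sc_ge0 : forall r, 0 <= sc r).
Hypotheses (ea_so : suborthonormal ea) (fa_so : suborthonormal fa) (eb_so : suborthonormal eb)
  (fb_so : suborthonormal fb) (ec_so : suborthonormal ec) (fc_so : suborthonormal fc).
Hypotheses (sa_sum : \sum_r sa r ^+ 2 = 1) (sb_sum : \sum_r sb r ^+ 2 = 1)
  (sc_sum : \sum_r sc r ^+ 2 = 1).
Variables (al : A1 * A2 -> algC) (be : B1 * B2 -> algC) (ga : C1 * C2 -> algC).
Hypotheses (alE : forall i, al i = \sum_r sa r * ea r i.1 * fa r i.2)
  (beE : forall i, be i = \sum_r sb r * eb r i.1 * fb r i.2)
  (gaE : forall i, ga i = \sum_r sc r * ec r i.1 * fc r i.2).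

Let amp s := triangle_amp (kA^~ s) (kB^~ s) (kC^~ s) al be ga.
Let qA s := gram_diag sb sc (fun I => mxv (kA^~ s) (tensorf eb ec I)).
Let qB s := gram_diag sa sc (fun I => mxv (kB^~ s) (tensorf ea fc I)).
Let qC s := gram_diag sa sb (fun I => mxv (kC^~ s) (tensorf fa fb I)).

Lemma nrm2_amp_finner s : nrm2 (amp s) ^+ 2 <= qA s * qB s * qC s.
Proof.
rewrite (eq_nrm2 (fun k => triangle_amp_schmidt _ _ _ k alE beE gaE)).
apply: le_trans (diag_triangle_amp_finner sa_ge0 sb_ge0 sc_ge0 _ _ _) _.
have massA := gram_mass_le_diag sb_ge0 sc_ge0 (kraus_row_contraction kA_tp s)
  (suborthonormal_tensorf eb_so ec_so).
have massB := gram_mass_le_diag sa_ge0 sc_ge0 (kraus_row_contraction kB_tp s)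
  (suborthonormal_tensorf ea_so fc_so).
have massC := gram_mass_le_diag sa_ge0 sb_ge0 (kraus_row_contraction kC_tp s)
  (suborthonormal_tensorf fa_so fb_so).
by rewrite ler_pM ?ler_pM ?mulr_ge0 ?gram_mass_ge0.
Qed.

Lemma ghz_amp_bound : nrm2 (fun k => amp ord0 k + amp ord_max k) <= sqrtC 2.
Proof.
have qA_sum : qA ord0 + qA ord_max <= 1.
  have := kraus_gram_diag_sum kA_tp sb_ge0 sc_ge0 (suborthonormal_tensorf eb_so ec_so).
  by rewrite sum_qubit sb_sum sc_sum mulr1.
have qB_sum : qB ord0 + qB ord_max <= 1.
  have := kraus_gram_diag_sum kB_tp sa_ge0 sc_ge0 (suborthonormal_tensorf ea_so fc_so).
  by rewrite sum_qubit sa_sum sc_sum mulr1.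
have qC_sum : qC ord0 + qC ord_max <= 1.
  have := kraus_gram_diag_sum kC_tp sa_ge0 sb_ge0 (suborthonormal_tensorf fa_so fb_so).
  by rewrite sum_qubit sa_sum sb_sum mulr1.
rewrite nrm2D; apply: (finner_scalar_bound (nrm2_ge0 _) (nrm2_ge0 _) (cauchy_schwarz _ _)
  _ _ _ _ _ _ qA_sum qB_sum qC_sum (nrm2_amp_finner _) (nrm2_amp_finner _)).
all: exact: gram_diag_ge0.
Qed.

End PureTriangle.

Lemma sum_ghz (F : qubit3 -> algC) :
  \sum_x (ghz x)^* * F x = (sqrtC 2)^-1 * (F (ord0, ord0, ord0) + F (ord_max, ord_max, ord_max)).
Proof.
have g_conj : ((sqrtC 2)^-1)^* = (sqrtC 2)^-1 :> algC by rewrite geC0_conj ?invr_ge0 ?sqrtC_ge0.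
rewrite (bigD1 (ord0, ord0, ord0)) //= (bigD1 (ord_max, ord_max, ord_max)) //=.
rewrite big1 ?addr0 => [|x /andP [/negbTE x_max /negbTE x_0]].
  by rewrite /ghz !eqxx /= g_conj mulrDr.
by rewrite /ghz x_0 x_max conjC0 mul0r.
Qed.

Lemma ghz_fidelity_gram (K : finType) (T : op qubit3) (Phi : qubit3 -> K -> algC) :
  (forall x x', T x x' = dotv (Phi x) (Phi x')) ->
  ghz_fidelity T = nrm2 (fun k => Phi (ord0, ord0, ord0) k + Phi (ord_max, ord_max, ord_max) k) / 2.
Proof.
move=> TE; have -> : ghz_fidelity T = nrm2 (fun k => \sum_x (ghz x)^* * Phi x k).
  rewrite /nrm2 dotv_suml; apply: eq_bigr => x _; rewrite dotvZl dotv_sumr mulr_sumr.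
  by apply: eq_bigr => x' _; rewrite dotvZr conjCK TE; ring.
rewrite (eq_nrm2 (fun k => sum_ghz (Phi^~ k))) /nrm2 dotvZl dotvZr.
rewrite geC0_conj ?invr_ge0 ?sqrtC_ge0 // mulrA -invfM -expr2 sqrtCK.
by rewrite mulrC.
Qed.

Lemma ghz_fidelity_mix (L : finType) (p : L -> algC) (T : L -> op qubit3) (rho : op qubit3) :
  (forall x x', rho x x' = \sum_l p l * T l x x') ->
  ghz_fidelity rho = \sum_l p l * ghz_fidelity (T l).
Proof.
move=> rhoE; rewrite /ghz_fidelity.
under eq_bigr do under eq_bigr do rewrite rhoE mulr_sumr mulr_suml.
under eq_bigr do rewrite exchange_big.
rewrite exchange_big; apply: eq_bigr => l _; rewrite mulr_sumr; apply: eq_bigr => x _.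
by rewrite mulr_sumr; apply: eq_bigr => x' _; ring.
Qed.

Section TriangleFidelity.
Variables (A1 A2 B1 B2 C1 C2 : finType).
Variables (EA : op (B1 * C1)%type -> op qubit) (EB : op (A1 * C2)%type -> op qubit)
  (EC : op (A2 * B2)%type -> op qubit).
Hypotheses (EA_ch : is_channel EA) (EB_ch : is_channel EB) (EC_ch : is_channel EC).

Lemma ghz_fidelity_triangle_pure (al : A1 * A2 -> algC) (be : B1 * B2 -> algC)
    (ga : C1 * C2 -> algC) :
  nrm2 al = 1 -> nrm2 be = 1 -> nrm2 ga = 1 ->
  ghz_fidelity (triangle_out (ketbra al) (ketbra be) (ketbra ga) EA EB EC) <= (sqrtC 2)^-1.
Proof.
move=> al_nrm be_nrm ga_nrm.
have [KA [kA [kA_tp EA_kraus]]] := EA_ch.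
have [KB [kB [kB_tp EB_kraus]]] := EB_ch.
have [KC [kC [kC_tp EC_kraus]]] := EC_ch.
have [sa [ea [fa [sa_ge0 ea_so fa_so alE]]]] := schmidt_decomposition al.
rewrite al_nrm => sa_sum.
have [sb [eb [fb [sb_ge0 eb_so fb_so beE]]]] := schmidt_decomposition be.
rewrite be_nrm => sb_sum.
have [sc [ec [fc [sc_ge0 ec_so fc_so gaE]]]] := schmidt_decomposition ga.
rewrite ga_nrm => sc_sum.
rewrite (ghz_fidelity_gram (triangle_out_pure EA_kraus EB_kraus EC_kraus al be ga)) /=.
have -> : (sqrtC 2)^-1 = sqrtC 2 / 2 :> algC.
  have s_neq0 : sqrtC 2 != 0 :> algC by rewrite sqrtC_eq0 pnatr_eq0.
  by apply: (mulfI s_neq0); rewrite mulfV // mulrA -expr2 sqrtCK divff ?pnatr_eq0.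
rewrite ler_pM2r ?invr_gt0 ?ltr0n //.
exact: (ghz_amp_bound kA_tp kB_tp kC_tp sa_ge0 sb_ge0 sc_ge0 ea_so fa_so eb_so fb_so
  ec_so fc_so sa_sum sb_sum sc_sum alE beE gaE).
Qed.

Lemma ghz_fidelity_triangle_out ra rb rc :
  density ra -> density rb -> density rc ->
  ghz_fidelity (triangle_out ra rb rc EA EB EC) <= (sqrtC 2)^-1.
Proof.
move=> ra_d rb_d rc_d.
have [da [va [da_ge0 va_nrm da_sum raE]]] := density_spectral ra_d.
have [db [vb [db_ge0 vb_nrm db_sum rbE]]] := density_spectral rb_d.
have [dc [vc [dc_ge0 vc_nrm dc_sum rcE]]] := density_spectral rc_d.
rewrite (ghz_fidelity_mix (triangle_out_mixture EA EB EC raE rbE rcE)).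
apply: convex_le => [m||m]; first by rewrite !mulr_ge0.
  by rewrite sum_tripleE /= -sum3_mul da_sum db_sum dc_sum !mul1r.
exact: ghz_fidelity_triangle_pure.
Qed.

End TriangleFidelity.

Theorem mainTheorem7 (rho : op qubit3) :
  triangle_preparable rho -> ghz_fidelity rho <= (sqrtC 2)^-1.
Proof.
move=> [da1 [da2 [db1 [db2 [dc1 [dc2 [ra [rb [rc [L [p [EA [EB [EC
  [[ra_d rb_d rc_d] p_ge0 p_sum channels rhoE]]]]]]]]]]]]]]].
rewrite (ghz_fidelity_mix rhoE); apply: convex_le p_ge0 p_sum _ => l.
have [EA_ch EB_ch EC_ch] := channels l.
exact: ghz_fidelity_triangle_out.
Qed.
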